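(* Let $k\ge 0$ and let $G=F_k$, of order $n=4k+3$. Then (a) $\gamma_t(G)=(n+1)/2$. Moreover, if $k\ge 1$ and $w\in\{v_1,v_2,v_3\}$ (the three subdivision vertices on the path $a_1v_1v_2v_3c_1$), then (b) $\gamma_t(G-w)=(n-1)/2$ and (c) $\gamma_t^a(G;w)=(n-1)/2$.
   Context: For a graph $G$ with no isolated vertex, a total dominating set (TD-set) is a set $S\subseteq V(G)$ such that every vertex of $G$ is adjacent to some vertex of $S$; $\gamma_t(G)$ is the minimum cardinality of a TD-set. For a vertex $v$ of $G$, an almost total dominating set (ATD-set) of $G$ with respect to $v$ is a set $S\subseteq V(G)$ with $v\in S$ such that every vertex different from $v$ is adjacent to a vertex of $S$ and $v$ has no neighbor in $S$; $\gamma_t^a(G;v)$ is its minimum cardinality. For $k\ge 1$, $G_k$ is the graph with vertex set $\{a_i,b_i,c_i,d_i:1\le i\le k\}$ whose edges are: the edges of the path $a_1b_1a_2b_2\cdots a_kb_k$, the edges of the path $c_1d_1c_2d_2\cdots c_kd_k$, the edges $a_id_i$ and $b_ic_i$ for every $1\le i\le k$, and the two edges $a_1c_1$ and $b_kd_k$. $F_0=C_3$, and for $k\ge1$, $F_k$ is obtained from $G_k$ by replacing the edge $a_1c_1$ by a path $a_1v_1v_2v_3c_1$ through three new vertices $v_1,v_2,v_3$. *)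

From mathcomp Require Import all_boot.
Set Implicit Arguments. Unset Strict Implicit. Unset Printing Implicit Defensive.

Section Dom.
Variables (T : finType) (e : rel T).

(* S is a total dominating set of the subgraph induced by D:
   S is contained in D and every vertex of D has a neighbour in S. *)
Definition is_TD (D S : {set T}) : bool :=
  (S \subset D) && [forall x in D, [exists y in S, e x y]].

(* gamma_t of the subgraph induced by D (minimum size of a TD-set;
   the default #|D| is only reached if no TD-set exists). *)
Definition gamma_t_on (D : {set T}) : nat :=
  \big[minn/#|D|]_(S : {set T} | is_TD D S) #|S|.

Definition gamma_t : nat := gamma_t_on setT.

Definition is_ATD (v : T) (S : {set T}) : bool :=
  [&& v \in S,
      [forall x, (x != v) ==> [exists y in S, e x y]] &
      [forall y in S, ~~ e v y]].

Definition gamma_ta (v : T) : nat :=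
  \big[minn/#|T|]_(S : {set T} | is_ATD v S) #|S|.
End Dom.

(* ---------- The graphs F_k on vertex set 'I_(4k+3) ----------
   Labelling (indices i = 0..k-1 correspond to the paper's 1..k):
   a_i = 4i, b_i = 4i+1, c_i = 4i+2, d_i = 4i+3,
   v1 = 4k, v2 = 4k+1, v3 = 4k+2.  For k = 0 the vertices 0,1,2 form C_3. *)
Definition va (i : nat) := 4 * i.
Definition vb (i : nat) := 4 * i + 1.
Definition vc (i : nat) := 4 * i + 2.
Definition vd (i : nat) := 4 * i + 3.
Definition vv1 (k : nat) := 4 * k.
Definition vv2 (k : nat) := 4 * k + 1.
Definition vv3 (k : nat) := 4 * k + 2.

Definition Fk_dedge (k x y : nat) : bool :=
  if k == 0 then
    [|| (x == 0) && (y == 1), (x == 1) && (y == 2) | (x == 2) && (y == 0)]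
  else
    [|| [exists i : 'I_k, (x == va i) && (y == vb i)],
        [exists i : 'I_k, (i.+1 < k) && (x == vb i) && (y == va i.+1)],
        [exists i : 'I_k, (x == vc i) && (y == vd i)],
        [exists i : 'I_k, (i.+1 < k) && (x == vd i) && (y == vc i.+1)],
        [exists i : 'I_k, (x == va i) && (y == vd i)],
        [exists i : 'I_k, (x == vb i) && (y == vc i)],
        (x == vb k.-1) && (y == vd k.-1),
        (x == va 0) && (y == vv1 k),
        (x == vv1 k) && (y == vv2 k),
        (x == vv2 k) && (y == vv3 k)
      | (x == vv3 k) && (y == vc 0)].

Definition Fk (k : nat) : rel 'I_(4 * k + 3) :=
  fun x y => Fk_dedge k x y || Fk_dedge k y x.
Arguments Fk k : clear implicits.

From mathcomp Require Import all_boot zify.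
Set Implicit Arguments. Unset Strict Implicit. Unset Printing Implicit Defensive.

(* Vertices of F_k carry natural-number labels: block i < k (the "ladder")
   consists of a_i = 4i, b_i = 4i+1, c_i = 4i+2, d_i = 4i+3, and the path
   vertices v1, v2, v3 are 4k, 4k+1, 4k+2.  For k >= 1 we show
   gamma_t(F_k) = 2k+2 and gamma_t(F_k - w) = gamma_t^a(F_k; w) = 2k+1;
   F_0 is the triangle, with gamma_t = 2.
   - Generic lemmas reduce each equality to an explicit set of the right
     size together with a lower bound for every admissible set.
   - The neighbourhood of each kind of vertex is read off the edge list.
   - Lower bound, by discharging along the ladder: if S dominates every
     ladder vertex, let the carry into block i be
     1 + [b_{i-1}, d_{i-1} in S] - [a_i, c_i in S] (with b_{-1} = v1 and
     d_{-1} = v3).  The number of vertices of S in block i plus its carry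
     is at least 2 plus the next carry, and at least 3 for the last block;
     telescoping, the ladder holds at least 2k+1 - carry_0 vertices of S.
     A truth table on v1, v2, v3, a_0, c_0 then settles the path in each of
     the seven situations (nothing deleted; w deleted; w an ATD-centre).
   - Upper bound: explicit sets made of the pairs {a_i, b_i} (or {b_0, c_0}
     and the {a_i, b_i} with i >= 1) plus one or two further vertices. *)

(* A minimum of naturals over a finite range is at most each admissible term
   (minn has no neutral element, so the usual bigD1 does not apply). *)
Lemma bigmin_le_term (I : finType) (P : pred I) (F : I -> nat) (d : nat) (i0 : I) :
  P i0 -> \big[minn/d]_(i | P i) F i <= F i0.
Proof.
move=> Pi0; have : i0 \in index_enum I by rewrite mem_index_enum.
elim: (index_enum I) => [//|i r IHr]; rewrite inE big_cons.
case: eqP => [<- _|_ /IHr le_r]; first by rewrite Pi0 geq_minl.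
by case: (P i) => //; exact: leq_trans (geq_minr _ _) le_r.
Qed.

Section MinimumRealisation.
Variables (T : finType) (e : rel T).

(* A TD-set of D that is a lower bound for all TD-sets of D realises
   gamma_t on D; the default #|D| of the minimum does not interfere since a
   TD-set of D is contained in D. *)
Lemma gamma_t_onE (D S0 : {set T}) (m : nat) :
  is_TD e D S0 -> #|S0| = m -> (forall S, is_TD e D S -> m <= #|S|) ->
  gamma_t_on e D = m.
Proof.
move=> TD0 <- lower; apply/eqP; rewrite eqn_leq; apply/andP; split.
  exact: bigmin_le_term.
apply: (big_ind (fun n => #|S0| <= n)) => [|n1 n2|S /lower] //.
- by case/andP: TD0 => /subset_leq_card.
- by rewrite leq_min => -> ->.
Qed.

Lemma gamma_taE (v : T) (S0 : {set T}) (m : nat) :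
  is_ATD e v S0 -> #|S0| = m -> (forall S, is_ATD e v S -> m <= #|S|) ->
  gamma_ta e v = m.
Proof.
move=> ATD0 <- lower; apply/eqP; rewrite eqn_leq; apply/andP; split.
  exact: bigmin_le_term.
apply: (big_ind (fun n => #|S0| <= n)) => [|n1 n2|S /lower] //.
- exact: max_card.
- by rewrite leq_min => -> ->.
Qed.

(* In a loopless graph, a TD-set of a nonempty D has at least two vertices:
   a neighbour in S of a vertex of D has itself a neighbour in S. *)
Lemma TD_two_vertices (D S : {set T}) (x : T) :
  irreflexive e -> is_TD e D S -> x \in D -> 2 <= #|S|.
Proof.
move=> e_irr /andP [/subsetP SD /forallP dom] xD.
have /existsP [y /andP [yS _]] := implyP (dom x) xD.
have /existsP [z /andP [zS y_z]] := implyP (dom y) (SD y yS).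
have y_neq_z : y != z by apply: contraTneq y_z => <-; rewrite e_irr.
have yz_S : [set y; z] \subset S by apply/subsetP => v; rewrite !inE => /orP [] /eqP ->.
by have := subset_leq_card yz_S; rewrite cards2 y_neq_z.
Qed.

End MinimumRealisation.

(* Adjacency of F_k on labels; Fk k u y unfolds to adj k (val u) (val y). *)
Definition adj (k x y : nat) : bool := Fk_dedge k x y || Fk_dedge k y x.

Lemma adjC (k x y : nat) : adj k x y = adj k y x.
Proof. by rewrite /adj orbC. Qed.

Ltac split_edge_hyps := repeat match goal with
 | H : is_true (_ || _) |- _ => case/orP: H => H
 | H : is_true (_ && _) |- _ => let H1 := fresh "H" in case/andP: H => H1 H
 | H : is_true [exists _, _] |- _ =>
     let j := fresh "j" in let Hj := fresh "Hj" in
     case/existsP: H => j H; have Hj := ltn_ord j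
 | H : is_true (_ == _) |- _ => move/eqP: H => H
 end.

Ltac neighbours :=
  case=> [//|k] ?;
  rewrite /adj /Fk_dedge /= /va /vb /vc /vd /vv1 /vv2 /vv3 => H;
  split_edge_hyps; lia.

Lemma nbr_a (k i y : nat) : i < k -> adj k (4*i) y ->
  y = 4*i+1 \/ y = 4*i+3 \/ (i = 0 /\ y = 4*k) \/ (0 < i /\ y+3 = 4*i).
Proof. move: k; neighbours. Qed.

Lemma nbr_b (k i y : nat) : i < k -> adj k (4*i+1) y ->
  y = 4*i \/ y = 4*i+2 \/ (i.+1 < k /\ y = 4*i+4) \/ (i.+1 = k /\ y = 4*i+3).
Proof. move: k; neighbours. Qed.

Lemma nbr_c (k i y : nat) : i < k -> adj k (4*i+2) y ->
  y = 4*i+1 \/ y = 4*i+3 \/ (i = 0 /\ y = 4*k+2) \/ (0 < i /\ y+1 = 4*i).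
Proof. move: k; neighbours. Qed.

Lemma nbr_d (k i y : nat) : i < k -> adj k (4*i+3) y ->
  y = 4*i+2 \/ y = 4*i \/ (i.+1 < k /\ y = 4*i+6) \/ (i.+1 = k /\ y = 4*i+1).
Proof. move: k; neighbours. Qed.

Lemma nbr_v1 (k y : nat) : 0 < k -> adj k (4*k) y -> y = 0 \/ y = 4*k+1.
Proof. move: k; neighbours. Qed.

Lemma nbr_v2 (k y : nat) : 0 < k -> adj k (4*k+1) y -> y = 4*k \/ y = 4*k+2.
Proof. move: k; neighbours. Qed.

Lemma nbr_v3 (k y : nat) : 0 < k -> adj k (4*k+2) y -> y = 4*k+1 \/ y = 2.
Proof. move: k; neighbours. Qed.

Ltac edge_disjunct n := match n with
 | 0 => try (apply/orP; left)
 | S ?m => apply/orP; right; edge_disjunct m end.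

Ltac edge_from n :=
  rewrite /adj /Fk_dedge [_.+1 == 0]/=; apply/orP; left; edge_disjunct n;
  rewrite /va /vb /vc /vd /vv1 /vv2 /vv3.
Ltac close_edge := rewrite /=; repeat (apply/andP; split); apply/eqP; lia.
Ltac edge_at i := apply/existsP; exists i; close_edge.

Lemma edge_ab (k i : nat) : i < k -> adj k (4*i) (4*i+1).
Proof. case: k => // k lt_ik; edge_from 0; edge_at (Ordinal lt_ik). Qed.

Lemma edge_cd (k i : nat) : i < k -> adj k (4*i+2) (4*i+3).
Proof. case: k => // k lt_ik; edge_from 2; edge_at (Ordinal lt_ik). Qed.

Lemma edge_ad (k i : nat) : i < k -> adj k (4*i) (4*i+3).
Proof. case: k => // k lt_ik; edge_from 4; edge_at (Ordinal lt_ik). Qed.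

Lemma edge_bc (k i : nat) : i < k -> adj k (4*i+1) (4*i+2).
Proof. case: k => // k lt_ik; edge_from 5; edge_at (Ordinal lt_ik). Qed.

Lemma edge_a0v1 (k : nat) : 0 < k -> adj k 0 (4*k).
Proof. case: k => // k _; edge_from 7; close_edge. Qed.

Lemma edge_v1v2 (k : nat) : 0 < k -> adj k (4*k) (4*k+1).
Proof. case: k => // k _; edge_from 8; close_edge. Qed.

Lemma edge_v2v3 (k : nat) : 0 < k -> adj k (4*k+1) (4*k+2).
Proof. case: k => // k _; edge_from 9; close_edge. Qed.

Lemma edge_v3c0 (k : nat) : 0 < k -> adj k (4*k+2) 2.
Proof. case: k => // k _; edge_from 10; close_edge. Qed.

Lemma sum_blocks (f : nat -> nat) (k : nat) :
  \sum_(0 <= m < 4*k) f m =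
  \sum_(0 <= i < k) (f (4*i) + f (4*i+1) + f (4*i+2) + f (4*i+3)).
Proof.
elim: k => [|k IHk]; first by rewrite !big_geq.
by rewrite [RHS]big_nat_recr //= -IHk mulnSr !addnS !big_nat_recr //= addn0 !addnA.
Qed.

Lemma sum_tail (f : nat -> nat) (k : nat) :
  \sum_(0 <= m < 4*k+3) f m =
  \sum_(0 <= m < 4*k) f m + (f (4*k) + f (4*k+1) + f (4*k+2)).
Proof. by rewrite !addnS !big_nat_recr //= addn0 !addnA. Qed.

Section Counting.
Variables (k : nat) (S : {set 'I_(4*k+3)}).

Definition picked (m : nat) : bool := [exists y in S, val y == m].

Lemma pickedE (y : 'I_(4*k+3)) : picked (val y) = (y \in S).
Proof.
apply/existsP/idP => [[z /andP [zS /eqP /val_inj <-]] // | yS].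
by exists y; rewrite yS eqxx.
Qed.

Definition block_count (i : nat) : nat :=
  picked (4*i) + picked (4*i+1) + picked (4*i+2) + picked (4*i+3).

Definition path_count : nat := picked (4*k) + picked (4*k+1) + picked (4*k+2).

Lemma card_by_blocks : #|S| = \sum_(0 <= i < k) block_count i + path_count.
Proof.
rewrite -(sum_blocks (fun m => nat_of_bool (picked m))) -sum_tail.
rewrite big_mkord -sum1_card big_mkcond /=; apply: eq_bigr => y _.
by rewrite pickedE; case: (y \in S).
Qed.

Definition dominates (m : nat) : Prop := exists2 y, picked y & adj k m y.

Lemma dominates_val (u : 'I_(4*k+3)) :
  [exists y in S, Fk k u y] -> dominates (val u).
Proof. by case/existsP => y /andP [yS u_y]; exists (val y); rewrite ?pickedE. Qed.

End Counting.

(* Boolean cores of the discharging argument, for a block a b c d whose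
   predecessor ends in b' d' and whose successor starts with a' c'; the
   hypotheses say that a, c, b, d are dominated.  A middle block plus its
   carry weighs at least 2 plus the next carry; the last block (which has
   the extra edge b d) weighs at least 3. *)
Lemma middle_block_table (b' d' a b c d a' c' : bool) :
  [|| b', b | d] -> [|| d', b | d] -> [|| a, c | a'] -> [|| a, c | c'] ->
  2 + (1 + (b && d) - (a' && c')) <= a + b + c + d + (1 + (b' && d') - (a && c)).
Proof. by case: b'; case: d'; case: a; case: b; case: c; case: d; case: a'; case: c'. Qed.

Lemma last_block_table (b' d' a b c d : bool) :
  [|| b', b | d] -> [|| d', b | d] -> [|| a, c | d] -> [|| a, c | b] ->
  3 <= a + b + c + d + (1 + (b' && d') - (a && c)).
Proof. by case: b'; case: d'; case: a; case: b; case: c; case: d. Qed.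

Section LadderBound.
Variables (k : nat) (S : {set 'I_(4*k+3)}).
Hypothesis ladder_dominated : forall m, m < 4*k -> dominates S m.
Local Notation x := (picked S).

(* The vertices playing the role of b_{i-1} and d_{i-1} for block i: the
   previous block, or v1 and v3 for block 0. *)
Definition prev_b (i : nat) : bool := if i == 0 then x (4*k) else x (4*i-3).
Definition prev_d (i : nat) : bool := if i == 0 then x (4*k+2) else x (4*i-1).

Definition carry (i : nat) : nat := 1 + (prev_b i && prev_d i) - (x (4*i) && x (4*i+2)).

Lemma dom_a i : i < k -> [|| prev_b i, x (4*i+1) | x (4*i+3)].
Proof.
move=> lt_ik; have [|y xy a_y] := ladder_dominated (m := 4*i); first lia.
case: (nbr_a lt_ik a_y) => [E|[E|[[i0 E]|[i_pos E]]]]; try subst y.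
- by rewrite xy orbT.
- by rewrite xy !orbT.
- by rewrite /prev_b i0 xy.
- by rewrite /prev_b ifN; [rewrite (_ : 4*i-3 = y) // | apply/eqP]; lia.
Qed.

Lemma dom_c i : i < k -> [|| prev_d i, x (4*i+1) | x (4*i+3)].
Proof.
move=> lt_ik; have [|y xy c_y] := ladder_dominated (m := 4*i+2); first lia.
case: (nbr_c lt_ik c_y) => [E|[E|[[i0 E]|[i_pos E]]]]; try subst y.
- by rewrite xy orbT.
- by rewrite xy !orbT.
- by rewrite /prev_d i0 xy.
- by rewrite /prev_d ifN; [rewrite (_ : 4*i-1 = y) // | apply/eqP]; lia.
Qed.

Lemma dom_b i : i < k ->
  [|| x (4*i), x (4*i+2) | if i.+1 == k then x (4*i+3) else x (4*i+4)].
Proof.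
move=> lt_ik; have [|y xy b_y] := ladder_dominated (m := 4*i+1); first lia.
case: (nbr_b lt_ik b_y) => [E|[E|[[lt_i1k E]|[last_i E]]]]; try subst y.
- by rewrite xy.
- by rewrite xy orbT.
- by rewrite ifN ?xy ?orbT //; apply/eqP; lia.
- by rewrite last_i eqxx xy !orbT.
Qed.

Lemma dom_d i : i < k ->
  [|| x (4*i), x (4*i+2) | if i.+1 == k then x (4*i+1) else x (4*i+6)].
Proof.
move=> lt_ik; have [|y xy d_y] := ladder_dominated (m := 4*i+3); first lia.
case: (nbr_d lt_ik d_y) => [E|[E|[[lt_i1k E]|[last_i E]]]]; try subst y.
- by rewrite xy orbT.
- by rewrite xy.
- by rewrite ifN ?xy ?orbT //; apply/eqP; lia.
- by rewrite last_i eqxx xy !orbT.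
Qed.

Lemma middle_block i : i.+1 < k -> 2 + carry i.+1 <= block_count S i + carry i.
Proof.
move=> lt_i1k; have lt_ik : i < k by lia.
have prev_b_next : prev_b i.+1 = x (4*i+1) by rewrite /prev_b /=; congr (x _); lia.
have prev_d_next : prev_d i.+1 = x (4*i+3) by rewrite /prev_d /=; congr (x _); lia.
have := dom_b lt_ik; have := dom_d lt_ik; rewrite !ifN; try by apply/eqP; lia.
rewrite /block_count /carry prev_b_next prev_d_next (_ : 4*i.+1 = 4*i+4); last by lia.
rewrite (_ : 4*i+4+2 = 4*i+6); last by lia.
move=> dom_d_i dom_b_i.
exact: middle_block_table (dom_a lt_ik) (dom_c lt_ik) dom_b_i dom_d_i.
Qed.

Lemma last_block i : i.+1 = k -> 3 <= block_count S i + carry i.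
Proof.
move=> last_i; have lt_ik : i < k by lia.
have := dom_b lt_ik; have := dom_d lt_ik; rewrite last_i eqxx => dom_d_i dom_b_i.
exact: last_block_table (dom_a lt_ik) (dom_c lt_ik) dom_b_i dom_d_i.
Qed.

Lemma ladder_tail j : j < k -> 2 * (k - j) + 1 <= \sum_(j <= i < k) block_count S i + carry j.
Proof.
move: {2}(k - j) (erefl (k - j)) => n; elim: n j => [|n IHn] j def_n lt_jk; first lia.
rewrite big_ltn //; case: (ltnP j.+1 k) => [lt_j1k | le_kj1].
- have := IHn j.+1 _ lt_j1k; have := middle_block lt_j1k; lia.
- rewrite big_geq //; have := @last_block j _; lia.
Qed.

Lemma ladder_bound : 0 < k -> 2 * k + 1 <= \sum_(0 <= i < k) block_count S i + carry 0.
Proof. by move=> k_pos; have := ladder_tail k_pos; rewrite subn0. Qed.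

End LadderBound.

(* Truth tables for the path v1 v2 v3: in each setting the path vertices of
   S, plus one, cover the carry into block 0 and the required surplus.
   Arguments: v1 v2 v3 and a = a_0, c = c_0. *)
Lemma path_table_TD (v1 v2 v3 a c : bool) :
  a || v2 -> v1 || v3 -> v2 || c ->
  2 + (1 + (v1 && v3) - (a && c)) <= v1 + v2 + v3 + 1.
Proof. by case: v1; case: v2; case: v3; case: a; case: c. Qed.

Lemma path_table_minus_v1 (v1 v2 v3 a c : bool) :
  v1 = false -> v1 || v3 -> v2 || c ->
  1 + (1 + (v1 && v3) - (a && c)) <= v1 + v2 + v3 + 1.
Proof. by move=> ->; case: v2; case: v3; case: a; case: c. Qed.

Lemma path_table_minus_v2 (v1 v2 v3 a c : bool) :
  v2 = false -> a || v2 -> v2 || c ->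
  1 + (1 + (v1 && v3) - (a && c)) <= v1 + v2 + v3 + 1.
Proof. by move=> ->; case: v1; case: v3; case: a; case: c. Qed.

Lemma path_table_minus_v3 (v1 v2 v3 a c : bool) :
  v3 = false -> a || v2 -> v1 || v3 ->
  1 + (1 + (v1 && v3) - (a && c)) <= v1 + v2 + v3 + 1.
Proof. by move=> ->; case: v1; case: v2; case: a; case: c. Qed.

Lemma path_table_ATD_v1 (v1 v2 v3 a c : bool) :
  v1 = true -> a = false -> v2 = false -> v2 || c ->
  1 + (1 + (v1 && v3) - (a && c)) <= v1 + v2 + v3 + 1.
Proof. by move=> -> -> ->; case: v3; case: c. Qed.

Lemma path_table_ATD_v2 (v1 v2 v3 a c : bool) :
  v2 = true -> v1 = false -> v3 = false ->
  1 + (1 + (v1 && v3) - (a && c)) <= v1 + v2 + v3 + 1.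
Proof. by move=> -> -> ->; case: a; case: c. Qed.

Lemma path_table_ATD_v3 (v1 v2 v3 a c : bool) :
  v3 = true -> v2 = false -> c = false -> a || v2 ->
  1 + (1 + (v1 && v3) - (a && c)) <= v1 + v2 + v3 + 1.
Proof. by move=> -> -> ->; case: v1; case: a. Qed.

Section PathBound.
Variables (k : nat) (S : {set 'I_(4*k+3)}).
Hypothesis k_pos : 0 < k.
Local Notation x := (picked S).

Lemma dom_v1 : dominates S (4*k) -> x 0 || x (4*k+1).
Proof. by case=> y xy /(nbr_v1 k_pos) [] y_def; subst y; rewrite xy ?orbT. Qed.

Lemma dom_v2 : dominates S (4*k+1) -> x (4*k) || x (4*k+2).
Proof. by case=> y xy /(nbr_v2 k_pos) [] y_def; subst y; rewrite xy ?orbT. Qed.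

Lemma dom_v3 : dominates S (4*k+2) -> x (4*k+1) || x 2.
Proof. by case=> y xy /(nbr_v3 k_pos) [] y_def; subst y; rewrite xy ?orbT. Qed.

Lemma carry0E : carry S 0 = 1 + (x (4*k) && x (4*k+2)) - (x 0 && x 2).
Proof. by rewrite /carry /prev_b /prev_d muln0. Qed.

Lemma card_lower_bound (t : nat) :
  (forall m, m < 4*k -> dominates S m) ->
  t + (1 + (x (4*k) && x (4*k+2)) - (x 0 && x 2)) <= path_count S + 1 ->
  2*k + t <= #|S|.
Proof.
move=> dom_ladder; rewrite -carry0E card_by_blocks.
have := ladder_bound dom_ladder k_pos; lia.
Qed.

Lemma TD_lower :
  (forall m, m < 4*k+3 -> dominates S m) -> 2*k + 2 <= #|S|.
Proof.
move=> dom; apply: card_lower_bound => [m lt_m|]; first by apply: dom; lia.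
apply: path_table_TD; [apply: dom_v1 | apply: dom_v2 | apply: dom_v3]; apply: dom; lia.
Qed.

Lemma TD_minus_lower (w : nat) : w \in [:: 4*k; 4*k+1; 4*k+2] ->
  (forall m, m < 4*k+3 -> m != w -> dominates S m) -> x w = false ->
  2*k + 1 <= #|S|.
Proof.
rewrite !inE => w_path dom xw.
apply: card_lower_bound => [m lt_m|]; first by apply: dom; lia.
case/or3P: w_path => /eqP w_def; rewrite w_def in xw dom.
- apply: path_table_minus_v1 xw _ _; [apply: dom_v2 | apply: dom_v3]; apply: dom; lia.
- apply: path_table_minus_v2 xw _ _; [apply: dom_v1 | apply: dom_v3]; apply: dom; lia.
- apply: path_table_minus_v3 xw _ _; [apply: dom_v1 | apply: dom_v2]; apply: dom; lia.
Qed.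

Lemma ATD_lower (w : nat) : w \in [:: 4*k; 4*k+1; 4*k+2] ->
  (forall m, m < 4*k+3 -> m != w -> dominates S m) -> x w ->
  (forall m, adj k w m -> x m = false) ->
  2*k + 1 <= #|S|.
Proof.
rewrite !inE => w_path dom xw nbr_out.
apply: card_lower_bound => [m lt_m|]; first by apply: dom; lia.
case/or3P: w_path => /eqP w_def; rewrite w_def in xw dom nbr_out.
- apply: path_table_ATD_v1 xw (nbr_out _ _) (nbr_out _ _) _.
  + by rewrite adjC edge_a0v1.
  + exact: edge_v1v2.
  + by apply: dom_v3; apply: dom; lia.
- apply: path_table_ATD_v2 xw (nbr_out _ _) (nbr_out _ _).
  + by rewrite adjC edge_v1v2.
  + exact: edge_v2v3.
- apply: path_table_ATD_v3 xw (nbr_out _ _) (nbr_out _ _) _.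
  + by rewrite adjC edge_v2v3.
  + exact: edge_v3c0.
  + by apply: dom_v1; apply: dom; lia.
Qed.

End PathBound.

Section Settings.
Variable k : nat.
Local Notation V := 'I_(4*k+3).

Lemma ordinal_neq (w : V) (m : nat) (lt_m : m < 4*k+3) : m != val w -> Ordinal lt_m != w.
Proof. by apply: contra => /eqP <-. Qed.

Lemma TD_dominates (D S : {set V}) (m : nat) (lt_m : m < 4*k+3) :
  is_TD (Fk k) D S -> Ordinal lt_m \in D -> dominates S m.
Proof. by case/andP=> _ /forallP dom /(implyP (dom _)) /dominates_val. Qed.

Lemma ATD_dominates (w : V) (S : {set V}) (m : nat) (lt_m : m < 4*k+3) :
  is_ATD (Fk k) w S -> m != val w -> dominates S m.
Proof.
case/and3P=> _ /forallP dom _ m_w; apply: (dominates_val (u := Ordinal lt_m)).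
exact: (implyP (dom _)) (ordinal_neq lt_m m_w).
Qed.

Lemma TD_minus_avoids (w : V) (S : {set V}) :
  is_TD (Fk k) [set~ w] S -> picked S (val w) = false.
Proof.
case/andP=> /subsetP sub_w _; rewrite pickedE.
by apply/negbTE/negP => /sub_w; rewrite !inE eqxx.
Qed.

Lemma ATD_centre (w : V) (S : {set V}) : is_ATD (Fk k) w S -> picked S (val w).
Proof. by case/and3P; rewrite pickedE. Qed.

Lemma ATD_no_neighbour (w : V) (S : {set V}) (m : nat) :
  is_ATD (Fk k) w S -> adj k (val w) m -> picked S m = false.
Proof.
case/and3P=> _ _ /forallP no_nbr w_m; apply/negbTE/negP => /existsP [y /andP [yS /eqP y_m]].
rewrite -y_m in w_m; exact: negP (implyP (no_nbr y) yS) w_m.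
Qed.

End Settings.

Lemma sum_two_per_block (a b : nat) (f : nat -> nat) :
  (forall i, a <= i < b -> f i = 2) -> \sum_(a <= i < b) f i = 2 * (b - a).
Proof. by move=> f2; rewrite (eq_big_nat _ _ f2) sum_nat_const_nat mulnC. Qed.

Section LabelSets.
Variable k : nat.
Local Notation V := 'I_(4*k+3).

Definition label_set (p : pred nat) : {set V} := [set u | p (val u)].

Lemma picked_label_set (p : pred nat) (m : nat) :
  m < 4*k+3 -> picked (label_set p) m = p m.
Proof. by move=> lt_m; rewrite (pickedE _ (Ordinal lt_m)) inE. Qed.

Lemma card_label_set (p : pred nat) :
  #|label_set p| = \sum_(0 <= i < k) (p (4*i) + p (4*i+1) + p (4*i+2) + p (4*i+3))
                    + (p (4*k) + p (4*k+1) + p (4*k+2)).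
Proof.
rewrite card_by_blocks /path_count !picked_label_set; try lia.
congr (_ + _); apply: eq_big_nat => i /andP [_ lt_ik].
by rewrite /block_count !picked_label_set //; lia.
Qed.

Lemma label_set_dominates (p : pred nat) (u : V) (m : nat) :
  m < 4*k+3 -> p m -> adj k (val u) m -> [exists y in label_set p, Fk k u y].
Proof. by move=> lt_m pm u_m; apply/existsP; exists (Ordinal lt_m); rewrite inE pm. Qed.

Lemma ladder_label (m : nat) : m < 4*k ->
  exists2 i, i < k & [\/ m = 4*i, m = 4*i+1, m = 4*i+2 | m = 4*i+3].
Proof.
move=> lt_m; exists (m %/ 4); first lia.
have := ltn_pmod m (isT : 0 < 4); move: (divn_eq m 4).
case: (m %% 4) => [|[|[|[|r]]]] m_def lt4; try lia.
- by constructor 1; lia.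
- by constructor 2; lia.
- by constructor 3; lia.
- by constructor 4; lia.
Qed.

(* The pairs {a_i, b_i}. *)
Definition ab_labels (m : nat) : bool := (m < 4*k) && (m %% 4 < 2).

(* The pairs {b_0, c_0} and {a_i, b_i} for i >= 1. *)
Definition bc_labels (m : nat) : bool :=
  (m < 4*k) && ((m == 1) || (m == 2) || (4 <= m) && (m %% 4 < 2)).

Lemma label_set_mono (p q : pred nat) (u : V) : (forall m, p m -> q m) ->
  [exists y in label_set p, Fk k u y] -> [exists y in label_set q, Fk k u y].
Proof.
move=> p_q /existsP [y /andP [py u_y]]; apply/existsP; exists y.
by move: py; rewrite !inE u_y andbT; apply: p_q.
Qed.

Lemma path_label (u : V) : 4*k <= val u ->
  [\/ val u = 4*k, val u = 4*k+1 | val u = 4*k+2].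
Proof.
move=> ge_u; have lt_u : val u < 4*k+3 := ltn_ord u.
by case: (ltngtP (val u) (4*k+1)) => [?|?|->]; [constructor 1|constructor 3|constructor 2]; lia.
Qed.

End LabelSets.

(* Dominate a vertex u, given u_def : val u = its label, by its neighbour
   labelled m, which lies in the label set, through the edge lemma edge. *)
Ltac by_neighbour u_def m edge :=
  apply: (label_set_dominates (m := m)); [lia | rewrite /ab_labels /bc_labels /=; lia |
    rewrite u_def; first [apply: edge | rewrite adjC; apply: edge]; lia].

Section WitnessSets.
Variable k : nat.
Local Notation V := 'I_(4*k+3).
Local Notation label_set := (label_set k).
Local Notation ab_labels := (ab_labels k).
Local Notation bc_labels := (bc_labels k).

Lemma ab_dominates_ladder (u : V) :
  val u < 4*k -> [exists y in label_set ab_labels, Fk k u y].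
Proof.
move=> /ladder_label [i lt_ik] [] u_def.
- by_neighbour u_def (4*i+1) edge_ab.
- by_neighbour u_def (4*i) edge_ab.
- by_neighbour u_def (4*i+1) edge_bc.
- by_neighbour u_def (4*i) edge_ad.
Qed.

Lemma bc_dominates_ladder (u : V) :
  val u < 4*k -> [exists y in label_set bc_labels, Fk k u y].
Proof.
move=> /ladder_label [i lt_ik] [] u_def;
  case: (posnP i) => [i0|i_pos]; try subst i.
- by_neighbour u_def 1 edge_ab.
- by_neighbour u_def (4*i+1) edge_ab.
- by_neighbour u_def 2 edge_bc.
- by_neighbour u_def (4*i) edge_ab.
- by_neighbour u_def 1 edge_bc.
- by_neighbour u_def (4*i+1) edge_bc.
- by_neighbour u_def 2 edge_cd.
- by_neighbour u_def (4*i) edge_ad.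
Qed.

Definition TD_set := label_set (fun m => [|| ab_labels m, m == 4*k | m == 4*k+1]).
Definition minus_v1_set := label_set (fun m => bc_labels m || (m == 4*k+2)).
Definition minus_v2_set := label_set (fun m => ab_labels m || (m == 2)).
Definition minus_v3_set := label_set (fun m => ab_labels m || (m == 4*k)).
Definition ATD_v1_set := label_set (fun m => bc_labels m || (m == 4*k)).
Definition ATD_v2_set := label_set (fun m => ab_labels m || (m == 4*k+1)).
Definition ATD_v3_set := label_set (fun m => ab_labels m || (m == 4*k+2)).

Lemma card_TD_set : #|TD_set| = 2*k+2.
Proof.
rewrite card_label_set sum_two_per_block => [|i]; rewrite /ab_labels; lia.
Qed.
Lemma card_minus_v1_set : #|minus_v1_set| = 2*k+1.
Proof. rewrite card_label_set sum_two_per_block => [|i]; rewrite /bc_labels; lia. Qed.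

Lemma card_minus_v2_set : 0 < k -> #|minus_v2_set| = 2*k+1.
Proof.
move=> k_pos; rewrite card_label_set big_ltn // sum_two_per_block => [|i]; rewrite /ab_labels; lia.
Qed.

Lemma card_minus_v3_set : #|minus_v3_set| = 2*k+1.
Proof. rewrite card_label_set sum_two_per_block => [|i]; rewrite /ab_labels; lia. Qed.

Lemma card_ATD_v1_set : #|ATD_v1_set| = 2*k+1.
Proof. rewrite card_label_set sum_two_per_block => [|i]; rewrite /bc_labels; lia. Qed.

Lemma card_ATD_v2_set : #|ATD_v2_set| = 2*k+1.
Proof. rewrite card_label_set sum_two_per_block => [|i]; rewrite /ab_labels; lia. Qed.

Lemma card_ATD_v3_set : #|ATD_v3_set| = 2*k+1.
Proof. rewrite card_label_set sum_two_per_block => [|i]; rewrite /ab_labels; lia. Qed.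

Lemma TD_minus_of (p : pred nat) (w : V) :
  ~~ p (val w) -> (forall u, u != w -> [exists y in label_set p, Fk k u y]) ->
  is_TD (Fk k) [set~ w] (label_set p).
Proof.
move=> pw_out dom; apply/andP; split.
  apply/subsetP => y; rewrite !inE; apply: contraTneq => ->; exact: pw_out.
by apply/forallP => u; apply/implyP; rewrite in_setC1; exact: dom.
Qed.

Lemma ATD_of (p : pred nat) (w : V) :
  p (val w) -> (forall m, adj k (val w) m -> ~~ p m) ->
  (forall u, u != w -> [exists y in label_set p, Fk k u y]) ->
  is_ATD (Fk k) w (label_set p).
Proof.
move=> pw nbr_out dom; apply/and3P; split; first by rewrite inE.
  by apply/forallP => u; apply/implyP; exact: dom.
by apply/forallP => y; apply/implyP; rewrite inE; apply: contraL => /nbr_out.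
Qed.

Lemma other_label (u w : V) (m : nat) : u != w -> val u = m -> val w = m -> False.
Proof. by move=> /eqP u_w u_m w_m; apply: u_w; apply: val_inj; rewrite u_m w_m. Qed.

End WitnessSets.

Section Witnesses.
Variable k : nat.
Hypothesis k_pos : 0 < k.
Local Notation V := 'I_(4*k+3).
Local Notation TD_set := (TD_set k).
Local Notation minus_v1_set := (minus_v1_set k).
Local Notation minus_v2_set := (minus_v2_set k).
Local Notation minus_v3_set := (minus_v3_set k).
Local Notation ATD_v1_set := (ATD_v1_set k).
Local Notation ATD_v2_set := (ATD_v2_set k).
Local Notation ATD_v3_set := (ATD_v3_set k).

Lemma TD_set_TD : is_TD (Fk k) setT TD_set.
Proof.
rewrite /is_TD subsetT; apply/forallP => u; apply/implyP => _.
case: (ltnP (val u) (4*k)) => [/ab_dominates_ladder|/path_label [] u_def].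
- by apply: label_set_mono => m ->.
- by_neighbour u_def (4*k+1) edge_v1v2.
- by_neighbour u_def (4*k) edge_v1v2.
- by_neighbour u_def (4*k+1) edge_v2v3.
Qed.

Lemma minus_v1_set_TD (w : V) : val w = 4*k -> is_TD (Fk k) [set~ w] minus_v1_set.
Proof.
move=> w_def; apply: TD_minus_of => [|u u_w]; first by rewrite w_def /bc_labels; lia.
case: (ltnP (val u) (4*k)) => [/bc_dominates_ladder|/path_label [] u_def].
- by apply: label_set_mono => m ->.
- by case: (other_label u_w u_def w_def).
- by_neighbour u_def (4*k+2) edge_v2v3.
- by_neighbour u_def 2 edge_v3c0.
Qed.

Lemma minus_v2_set_TD (w : V) : val w = 4*k+1 -> is_TD (Fk k) [set~ w] minus_v2_set.
Proof.
move=> w_def; apply: TD_minus_of => [|u u_w]; first by rewrite w_def /ab_labels; lia.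
case: (ltnP (val u) (4*k)) => [/ab_dominates_ladder|/path_label [] u_def].
- by apply: label_set_mono => m ->.
- by_neighbour u_def 0 edge_a0v1.
- by case: (other_label u_w u_def w_def).
- by_neighbour u_def 2 edge_v3c0.
Qed.

Lemma minus_v3_set_TD (w : V) : val w = 4*k+2 -> is_TD (Fk k) [set~ w] minus_v3_set.
Proof.
move=> w_def; apply: TD_minus_of => [|u u_w]; first by rewrite w_def /ab_labels; lia.
case: (ltnP (val u) (4*k)) => [/ab_dominates_ladder|/path_label [] u_def].
- by apply: label_set_mono => m ->.
- by_neighbour u_def 0 edge_a0v1.
- by_neighbour u_def (4*k) edge_v1v2.
- by case: (other_label u_w u_def w_def).
Qed.

Lemma ATD_v1_set_ATD (w : V) : val w = 4*k -> is_ATD (Fk k) w ATD_v1_set.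
Proof.
move=> w_def; apply: ATD_of => [|m|u u_w]; first by rewrite w_def /bc_labels; lia.
  by rewrite w_def => /(nbr_v1 k_pos) []; rewrite /bc_labels; lia.
case: (ltnP (val u) (4*k)) => [/bc_dominates_ladder|/path_label [] u_def].
- by apply: label_set_mono => m ->.
- by case: (other_label u_w u_def w_def).
- by_neighbour u_def (4*k) edge_v1v2.
- by_neighbour u_def 2 edge_v3c0.
Qed.

Lemma ATD_v2_set_ATD (w : V) : val w = 4*k+1 -> is_ATD (Fk k) w ATD_v2_set.
Proof.
move=> w_def; apply: ATD_of => [|m|u u_w]; first by rewrite w_def /ab_labels; lia.
  by rewrite w_def => /(nbr_v2 k_pos) []; rewrite /ab_labels; lia.
case: (ltnP (val u) (4*k)) => [/ab_dominates_ladder|/path_label [] u_def].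
- by apply: label_set_mono => m ->.
- by_neighbour u_def 0 edge_a0v1.
- by case: (other_label u_w u_def w_def).
- by_neighbour u_def (4*k+1) edge_v2v3.
Qed.

Lemma ATD_v3_set_ATD (w : V) : val w = 4*k+2 -> is_ATD (Fk k) w ATD_v3_set.
Proof.
move=> w_def; apply: ATD_of => [|m|u u_w]; first by rewrite w_def /ab_labels; lia.
  by rewrite w_def => /(nbr_v3 k_pos) []; rewrite /ab_labels; lia.
case: (ltnP (val u) (4*k)) => [/ab_dominates_ladder|/path_label [] u_def].
- by apply: label_set_mono => m ->.
- by_neighbour u_def 0 edge_a0v1.
- by_neighbour u_def (4*k+2) edge_v2v3.
- by case: (other_label u_w u_def w_def).
Qed.

End Witnesses.

Lemma gamma_t_triangle : gamma_t (Fk 0) = 2.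
Proof.
have irr : irreflexive (Fk 0) by case=> [[|[|[|m]]] lt_m].
apply: (gamma_t_onE (S0 := label_set 0 (fun m => m < 2))) => [| | S TD].
- apply/andP; split; first exact: subsetT.
  apply/forallP => -[[|[|[|m]]] lt_m] //=; apply/implyP => _.
  + by apply: (label_set_dominates (m := 1)).
  + by apply: (label_set_dominates (m := 0)).
  + by apply: (label_set_dominates (m := 0)).
- by rewrite card_label_set big_geq.
- exact: TD_two_vertices irr TD (in_setT ord0).
Qed.

Section Values.
Variable k : nat.
Hypothesis k_pos : 0 < k.
Variable w : 'I_(4*k+3).
Hypothesis w_path : val w \in [:: vv1 k; vv2 k; vv3 k].

Lemma gamma_t_Fk : gamma_t (Fk k) = 2*k+2.
Proof.
rewrite /gamma_t; apply: gamma_t_onE (TD_set_TD k_pos) (card_TD_set k) _ => S TD.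
by apply: TD_lower k_pos _ => m lt_m; exact: (TD_dominates (lt_m := lt_m) TD (in_setT _)).
Qed.

Lemma gamma_t_Fk_minus : gamma_t_on (Fk k) [set~ w] = 2*k+1.
Proof.
have lower S : is_TD (Fk k) [set~ w] S -> 2*k+1 <= #|S|.
  move=> TD; apply: (TD_minus_lower k_pos w_path _ (TD_minus_avoids TD)) => m lt_m m_w.
  by apply: (TD_dominates (lt_m := lt_m) TD); rewrite in_setC1 ordinal_neq.
move: w_path; rewrite !inE => /or3P [] /eqP w_def.
- exact: gamma_t_onE (minus_v1_set_TD k_pos w_def) (card_minus_v1_set k) lower.
- exact: gamma_t_onE (minus_v2_set_TD k_pos w_def) (card_minus_v2_set k_pos) lower.
- exact: gamma_t_onE (minus_v3_set_TD k_pos w_def) (card_minus_v3_set k) lower.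
Qed.

Lemma gamma_ta_Fk : gamma_ta (Fk k) w = 2*k+1.
Proof.
have lower S : is_ATD (Fk k) w S -> 2*k+1 <= #|S|.
  move=> ATD; apply: (ATD_lower k_pos w_path _ (ATD_centre ATD)) => [m lt_m m_w|m].
    exact: ATD_dominates lt_m ATD m_w.
  exact: ATD_no_neighbour ATD.
move: w_path; rewrite !inE => /or3P [] /eqP w_def.
- exact: gamma_taE (ATD_v1_set_ATD k_pos w_def) (card_ATD_v1_set k) lower.
- exact: gamma_taE (ATD_v2_set_ATD k_pos w_def) (card_ATD_v2_set k) lower.
- exact: gamma_taE (ATD_v3_set_ATD k_pos w_def) (card_ATD_v3_set k) lower.
Qed.

End Values.

Theorem mainTheorem3 (k : nat) :
  gamma_t (Fk k) = ((4 * k + 3) + 1) %/ 2 /\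
  (1 <= k -> forall w : 'I_(4 * k + 3),
     val w \in [:: vv1 k; vv2 k; vv3 k] ->
     gamma_t_on (Fk k) [set~ w] = ((4 * k + 3) - 1) %/ 2 /\
     gamma_ta (Fk k) w = ((4 * k + 3) - 1) %/ 2).
Proof.
have [-> | k_pos] := posnP k; first by split; [exact: gamma_t_triangle |].
have -> : (4 * k + 3 + 1) %/ 2 = 2 * k + 2 by lia.
have -> : (4 * k + 3 - 1) %/ 2 = 2 * k + 1 by lia.
split; first exact: gamma_t_Fk.
by move=> _ w w_path; split; [exact: gamma_t_Fk_minus | exact: gamma_ta_Fk].
Qed.
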